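(* Let $a=1$, $b=-1$. For all $(J,E)\in D_1$ one has $\frac{\partial T}{\partial E}(J,E)>0$ and $\frac{\partial T}{\partial J}(J,E)<0$.
   Context: With $a=1$, $b=-1$, let $V_J(r)=\frac{J^2}{2r^2}+\frac{r^2}{2}-\frac{r^4}{4}$. For $0<J<\sqrt{4/27}$ write $J=q(1-q^2)=Q(1-Q^2)$ with $0<q<1/\sqrt3<Q<1$, and set $E_-(J)=\frac14(1-Q^2)(3Q^2+1)$, $E_+(J)=\frac14(1-q^2)(3q^2+1)$. Let $D_1=\{(J,E):0<J<\sqrt{4/27},\ E_-(J)<E<E_+(J)\}$. For $(J,E)\in D_1$, let $r_1<r_2<r_3$ be the positive roots of $E-V_J(r)$ and define $T(J,E)=2\int_{r_1}^{r_2}\frac{dr}{\sqrt{2(E-V_J(r))}}$ (the period of the modulus of the solution of $u_{xx}+u-|u|^2u=0$ with $\operatorname{Im}(u\bar u_x)=J$ and $\frac12|u_x|^2+\frac12|u|^2-\frac14|u|^4=E$). *)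

From Stdlib Require Import Reals Lra ClassicalEpsilon.
From Coquelicot Require Import Coquelicot.
Open Scope R_scope.

(* Effective potential with a = 1, b = -1. *)
Definition V (J r : R) : R := J ^ 2 / (2 * r ^ 2) + r ^ 2 / 2 - r ^ 4 / 4.

(* E_-(J) = 1/4 (1-Q^2)(3Q^2+1), E_+(J) = 1/4 (1-q^2)(3q^2+1) as functions of Q, q. *)
Definition Eq (x : R) : R := / 4 * (1 - x ^ 2) * (3 * x ^ 2 + 1).

Definition D1 (J E : R) : Prop :=
  0 < J < sqrt (4 / 27) /\
  exists q Q : R,
    0 < q < / sqrt 3 /\ / sqrt 3 < Q < 1 /\
    J = q * (1 - q ^ 2) /\ J = Q * (1 - Q ^ 2) /\
    Eq Q < E < Eq q.

Definition root_triple (J E : R) (t : R * R * R) : Prop :=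
  let '(r1, r2, r3) := t in
  0 < r1 < r2 /\ r2 < r3 /\
  E - V J r1 = 0 /\ E - V J r2 = 0 /\ E - V J r3 = 0 /\
  (forall r, 0 < r -> E - V J r = 0 -> r = r1 \/ r = r2 \/ r = r3).

Definition roots (J E : R) : R * R * R :=
  epsilon (inhabits (0, 0, 0)) (root_triple J E).

Definition T (J E : R) : R :=
  let '(r1, r2, _) := roots J E in
  2 * RInt_gen (fun r => / sqrt (2 * (E - V J r))) (at_right r1) (at_left r2).

From Stdlib Require Import Reals Lra Psatz ClassicalEpsilon.
From Coquelicot Require Import Coquelicot.
Open Scope R_scope.

(* With s = r^2, E - V_J(r) = P(s) / (4 s) where P(s) = s^3 - 2 s^2 + 4 E s - 2 J^2, and on
   D_1 the cubic P has three simple positive roots s1 < s2 < s3, with r_i = sqrt s_i.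
   The substitution r^2 = s1 cos^2 t + s2 sin^2 t removes both endpoint singularities:
   T = 2 sqrt 2 * int_0^(pi/2) Delta^(-1/2) dt with Delta = s3 - s1 cos^2 t - s2 sin^2 t > 0.
   When (b, c) = (4 E, 2 J^2) moves with velocity (db, dc), implicit differentiation gives
   s_i' = x_i = (dc - db s_i) / P'(s_i), and differentiating under the integral sign,
   T' = sqrt 2 * ((x1 - x3) A + (x2 - x3) B) with A = int cos^2 t w, B = int sin^2 t w and
   w = Delta^(-3/2) > 0. The reflection t -> pi/2 - t exchanges s1 and s2 in Delta, whence
   A <= B. Finally x1 + x2 + x3 = 0 (Lagrange interpolation) and P'(s2) < 0 < P'(s3): moving E
   (db > 0 = dc) gives x3 < 0 < x2, hence T' > 0, and moving J (dc > 0 = db) gives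
   x2 < 0 < x3, hence T' < 0. *)

(** * The cubic in s = r^2 *)

Definition cubic (b c s : R) : R := s ^ 3 - 2 * s ^ 2 + b * s - c.
Definition dcubic (b s : R) : R := 3 * s ^ 2 - 4 * s + b.

Lemma V_cubic J E r : 0 < r -> E - V J r = cubic (4 * E) (2 * J ^ 2) (r ^ 2) / (4 * r ^ 2).
Proof. intros. unfold V, cubic. field. lra. Qed.

Lemma cubic_vieta b c s1 s2 s3 : s1 <> s2 -> s1 <> s3 -> s2 <> s3 ->
  cubic b c s1 = 0 -> cubic b c s2 = 0 -> cubic b c s3 = 0 ->
  s1 + s2 + s3 = 2 /\ b = s1 * s2 + s1 * s3 + s2 * s3 /\ c = s1 * s2 * s3.
Proof.
  intros N12 N13 N23 P1 P2 P3.
  assert (D12 : s1 ^ 2 + s1 * s2 + s2 ^ 2 - 2 * (s1 + s2) + b = 0).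
  { apply (Rmult_eq_reg_l (s2 - s1)); [|lra].
    transitivity (cubic b c s2 - cubic b c s1); [unfold cubic; ring | lra]. }
  assert (D13 : s1 ^ 2 + s1 * s3 + s3 ^ 2 - 2 * (s1 + s3) + b = 0).
  { apply (Rmult_eq_reg_l (s3 - s1)); [|lra].
    transitivity (cubic b c s3 - cubic b c s1); [unfold cubic; ring | lra]. }
  assert (S : s1 + s2 + s3 = 2).
  { apply (Rmult_eq_reg_l (s3 - s2)); lra. }
  unfold cubic in P1. split; [exact S | split; nra].
Qed.

Definition pos_roots (b c s1 s2 s3 : R) : Prop :=
  0 < s1 /\ s1 < s2 /\ s2 < s3 /\
  cubic b c s1 = 0 /\ cubic b c s2 = 0 /\ cubic b c s3 = 0.

Lemma pos_roots_vieta b c s1 s2 s3 : pos_roots b c s1 s2 s3 ->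
  s1 + s2 + s3 = 2 /\ b = s1 * s2 + s1 * s3 + s2 * s3 /\ c = s1 * s2 * s3.
Proof. intros (? & ? & ? & ? & ? & ?). apply cubic_vieta; auto; lra. Qed.

Lemma pos_roots_factor b c s1 s2 s3 : pos_roots b c s1 s2 s3 ->
  forall s, cubic b c s = (s - s1) * (s - s2) * (s - s3).
Proof.
  intros H s. destruct (pos_roots_vieta _ _ _ _ _ H) as (S & -> & ->).
  unfold cubic. rewrite <- S. ring.
Qed.

Lemma pos_roots_dcubic b c s1 s2 s3 : pos_roots b c s1 s2 s3 ->
  dcubic b s1 = (s1 - s2) * (s1 - s3) /\ dcubic b s2 = (s2 - s1) * (s2 - s3) /\
  dcubic b s3 = (s3 - s1) * (s3 - s2).
Proof.
  intros H. destruct (pos_roots_vieta _ _ _ _ _ H) as (S & -> & _).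
  unfold dcubic. replace 4 with (2 * (s1 + s2 + s3)) by lra. repeat split; ring.
Qed.

Lemma pos_roots_dcubic_neq0 b c s1 s2 s3 : pos_roots b c s1 s2 s3 ->
  dcubic b s1 <> 0 /\ dcubic b s2 <> 0 /\ dcubic b s3 <> 0.
Proof.
  intros H. pose proof H as (_ & ? & ? & _).
  destruct (pos_roots_dcubic _ _ _ _ _ H) as (-> & -> & ->).
  repeat split; apply Rmult_integral_contrapositive; split; lra.
Qed.

Lemma root_triple_unique J E t t' : root_triple J E t -> root_triple J E t' -> t = t'.
Proof.
  destruct t as [[a1 a2] a3], t' as [[b1 b2] b3]; simpl.
  intros ((A0 & A1) & A2 & _ & _ & _ & U) ((B0 & B1) & B2 & E1 & E2 & E3 & _).
  pose proof (U b1 ltac:(lra) E1). pose proof (U b2 ltac:(lra) E2).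
  pose proof (U b3 ltac:(lra) E3).
  f_equal; [f_equal|]; lra.
Qed.

Lemma root_triple_sqrt J E s1 s2 s3 : pos_roots (4 * E) (2 * J ^ 2) s1 s2 s3 ->
  root_triple J E (sqrt s1, sqrt s2, sqrt s3).
Proof.
  intros H. pose proof H as (H0 & H12 & H23 & _).
  assert (root_sq : forall r, 0 < r -> E - V J r = 0 <-> cubic (4 * E) (2 * J ^ 2) (r ^ 2) = 0).
  { intros r Hr. rewrite V_cubic by exact Hr. split; intros Z.
    - apply (Rmult_eq_reg_r (/ (4 * r ^ 2))); [lra|]. apply Rinv_neq_0_compat. nra.
    - rewrite Z. unfold Rdiv. ring. }
  assert (sqrt_root : forall s, 0 < s -> cubic (4 * E) (2 * J ^ 2) s = 0 -> E - V J (sqrt s) = 0).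
  { intros s Hs Z. apply root_sq; [now apply sqrt_lt_R0|]. rewrite pow2_sqrt; lra. }
  simpl. split; [split|]; [apply sqrt_lt_R0; lra | apply sqrt_lt_1; lra |].
  split; [apply sqrt_lt_1; lra|].
  repeat split; try (apply sqrt_root; [lra | apply H]).
  intros r Hr Z. apply root_sq in Z; [|exact Hr].
  rewrite (pos_roots_factor _ _ _ _ _ H) in Z.
  assert (r = sqrt (r ^ 2)) as Er by (rewrite sqrt_pow2; lra).
  destruct (Rmult_integral _ _ Z) as [Z'|Z3]; [destruct (Rmult_integral _ _ Z') as [Z1|Z2]|].
  - left. rewrite Er. f_equal. lra.
  - right; left. rewrite Er. f_equal. lra.
  - right; right. rewrite Er. f_equal. lra.
Qed.

Lemma roots_of_pos_roots J E s1 s2 s3 : pos_roots (4 * E) (2 * J ^ 2) s1 s2 s3 ->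
  roots J E = (sqrt s1, sqrt s2, sqrt s3).
Proof.
  intros H. pose proof (root_triple_sqrt _ _ _ _ _ H) as Ht.
  apply (root_triple_unique J E); [|exact Ht].
  unfold roots. apply epsilon_spec. now exists (sqrt s1, sqrt s2, sqrt s3).
Qed.

Definition root_sq1 (J E : R) : R := fst (fst (roots J E)) ^ 2.
Definition root_sq2 (J E : R) : R := snd (fst (roots J E)) ^ 2.
Definition root_sq3 (J E : R) : R := snd (roots J E) ^ 2.

Lemma root_sq_eq J E s1 s2 s3 : pos_roots (4 * E) (2 * J ^ 2) s1 s2 s3 ->
  root_sq1 J E = s1 /\ root_sq2 J E = s2 /\ root_sq3 J E = s3.
Proof.
  intros H. unfold root_sq1, root_sq2, root_sq3. rewrite (roots_of_pos_roots _ _ _ _ _ H).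
  destruct H as (? & ? & ? & _). cbn [fst snd]. rewrite !pow2_sqrt by lra. auto.
Qed.

Lemma cubic_continuous b c s : continuous (cubic b c) s.
Proof. apply (ex_derive_continuous (V := R_NormedModule)). unfold cubic. auto_derive. auto. Qed.

Lemma cubic_root_between b c lo hi : lo < hi -> cubic b c lo * cubic b c hi < 0 ->
  exists s, lo < s < hi /\ cubic b c s = 0.
Proof.
  intros Hlh Hsign.
  assert (Hc : continuity (cubic b c)).
  { intros s. apply continuity_pt_filterlim, cubic_continuous. }
  destruct (IVT_cor _ _ _ Hc (Rlt_le _ _ Hlh) (Rlt_le _ _ Hsign)) as [s [Hs Z]].
  exists s. split; [|exact Z].
  split; apply Rnot_le_lt; intros Hle;
    [ replace s with lo in Z by lra | replace s with hi in Z by lra ];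
    rewrite Z in Hsign; lra.
Qed.

Lemma pos_roots_between b c l1 u1 l2 u2 l3 u3 :
  0 <= l1 < u1 -> u1 <= l2 < u2 -> u2 <= l3 < u3 ->
  cubic b c l1 * cubic b c u1 < 0 -> cubic b c l2 * cubic b c u2 < 0 ->
  cubic b c l3 * cubic b c u3 < 0 ->
  exists s1 s2 s3, pos_roots b c s1 s2 s3 /\ l1 < s1 < u1 /\ l2 < s2 < u2 /\ l3 < s3 < u3.
Proof.
  intros I1 I2 I3 C1 C2 C3.
  destruct (cubic_root_between _ _ _ _ (proj2 I1) C1) as [s1 [H1 Z1]].
  destruct (cubic_root_between _ _ _ _ (proj2 I2) C2) as [s2 [H2 Z2]].
  destruct (cubic_root_between _ _ _ _ (proj2 I3) C3) as [s3 [H3 Z3]].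
  exists s1, s2, s3. repeat split; auto; lra.
Qed.

(* E_-(J) and E_+(J) are the energies at which 1 - Q^2, resp. 1 - q^2, is a root. *)
Lemma cubic_at_turning_point E x :
  cubic (4 * E) (2 * (x * (1 - x ^ 2)) ^ 2) (1 - x ^ 2) = 4 * (1 - x ^ 2) * (E - Eq x).
Proof. unfold cubic, Eq. field. Qed.

Lemma D1_pos_roots J E : D1 J E -> exists s1 s2 s3, pos_roots (4 * E) (2 * J ^ 2) s1 s2 s3.
Proof.
  intros [HJ [q [Q (Hq & HQ & Jq & JQ & HE)]]].
  assert (Hq1 : q < 1) by lra.
  assert (HqQ : q < Q) by lra.
  set (P := cubic (4 * E) (2 * J ^ 2)).
  assert (P0 : P 0 < 0) by (unfold P, cubic; nra).
  assert (PQ : 0 < P (1 - Q ^ 2)).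
  { unfold P. rewrite JQ, cubic_at_turning_point. apply Rmult_lt_0_compat; nra. }
  assert (Pq : P (1 - q ^ 2) < 0).
  { unfold P. rewrite Jq, cubic_at_turning_point.
    assert (0 < 4 * (1 - q ^ 2)) by nra. nra. }
  assert (P2 : 0 < P 2).
  { unfold P, cubic. rewrite JQ. unfold Eq in HE.
    assert (0 < (1 - Q ^ 2) * (3 * Q ^ 2 + 1 - Q ^ 2 * (1 - Q ^ 2))) by
      (apply Rmult_lt_0_compat; nra).
    nra. }
  destruct (pos_roots_between (4 * E) (2 * J ^ 2) 0 (1 - Q ^ 2) (1 - Q ^ 2) (1 - q ^ 2)
    (1 - q ^ 2) 2) as (s1 & s2 & s3 & H & _).
  1-3: split; nra.
  1-3: fold P; nra.
  exists s1, s2, s3. exact H.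
Qed.

(** * Dependence of the roots on the coefficients *)

Lemma continuous_locally_pos (f : R -> R) x : continuous f x -> 0 < f x ->
  locally x (fun y => 0 < f y).
Proof.
  intros Hc Hp. apply (filterlim_locally (F := locally x)) with (eps := mkposreal _ Hp) in Hc.
  eapply filter_imp; [|exact Hc]. intros y Hy.
  change (Rabs (f y - f x) < f x) in Hy. apply Rabs_def2 in Hy. lra.
Qed.

Lemma continuous_locally_neg (f : R -> R) x : continuous f x -> f x < 0 ->
  locally x (fun y => f y < 0).
Proof.
  intros Hc Hn.
  apply (filter_imp (fun y => 0 < - f y)); [intros; lra|].
  apply continuous_locally_pos; [apply (continuous_opp (V := R_NormedModule)), Hc | lra].
Qed.

Lemma continuous_cubic_coeffs (b c : R -> R) s p : continuous b p -> continuous c p ->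
  continuous (fun p => cubic (b p) (c p) s) p.
Proof.
  intros Hb Hc. unfold cubic.
  apply (continuous_minus (V := R_NormedModule)); [|exact Hc].
  apply (continuous_plus (V := R_NormedModule)); [apply continuous_const|].
  apply (continuous_mult (K := R_AbsRing)); [exact Hb | apply continuous_const].
Qed.

Lemma cubic_shifted_product s1 s2 s3 s k :
  (s - k - s1) * (s - k - s2) * (s - k - s3) * ((s + k - s1) * (s + k - s2) * (s + k - s3))
  = ((s - s1) ^ 2 - k ^ 2) * ((s - s2) ^ 2 - k ^ 2) * ((s - s3) ^ 2 - k ^ 2).
Proof. ring. Qed.

Lemma pos_roots_sign_change b c s1 s2 s3 s k : pos_roots b c s1 s2 s3 ->
  s = s1 \/ s = s2 \/ s = s3 -> 0 < k -> 2 * k <= s2 - s1 -> 2 * k <= s3 - s2 ->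
  cubic b c (s - k) * cubic b c (s + k) < 0.
Proof.
  intros H Hs Hk G12 G23.
  rewrite !(pos_roots_factor _ _ _ _ _ H), cubic_shifted_product.
  assert (A12 : 0 < (s1 - s2) ^ 2 - k ^ 2) by nra.
  assert (A13 : 0 < (s1 - s3) ^ 2 - k ^ 2) by nra.
  assert (A23 : 0 < (s2 - s3) ^ 2 - k ^ 2) by nra.
  assert (0 < k ^ 2) by nra.
  assert (0 < k ^ 2 * ((s1 - s2) ^ 2 - k ^ 2) * ((s1 - s3) ^ 2 - k ^ 2)) by
    (apply Rmult_lt_0_compat; [apply Rmult_lt_0_compat|]; lra).
  assert (0 < k ^ 2 * ((s1 - s2) ^ 2 - k ^ 2) * ((s2 - s3) ^ 2 - k ^ 2)) by
    (apply Rmult_lt_0_compat; [apply Rmult_lt_0_compat|]; lra).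
  assert (0 < k ^ 2 * ((s1 - s3) ^ 2 - k ^ 2) * ((s2 - s3) ^ 2 - k ^ 2)) by
    (apply Rmult_lt_0_compat; [apply Rmult_lt_0_compat|]; lra).
  destruct Hs as [-> | [-> | ->]]; lra.
Qed.

Lemma pos_roots_stable (b c : R -> R) p0 s1 s2 s3 (eps : posreal) :
  continuous b p0 -> continuous c p0 -> pos_roots (b p0) (c p0) s1 s2 s3 ->
  locally p0 (fun p => exists r1 r2 r3, pos_roots (b p) (c p) r1 r2 r3 /\
    Rabs (r1 - s1) < eps /\ Rabs (r2 - s2) < eps /\ Rabs (r3 - s3) < eps).
Proof.
  intros Hb Hc H. pose proof H as (H0 & H12 & H23 & _).
  set (m := Rmin eps (Rmin s1 (Rmin (s2 - s1) (s3 - s2)))).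
  assert (Hm : 0 < m /\ m <= eps /\ m <= s1 /\ m <= s2 - s1 /\ m <= s3 - s2).
  { pose proof (cond_pos eps). unfold m.
    pose proof (Rmin_l (s2 - s1) (s3 - s2)). pose proof (Rmin_r (s2 - s1) (s3 - s2)).
    pose proof (Rmin_l s1 (Rmin (s2 - s1) (s3 - s2))).
    pose proof (Rmin_r s1 (Rmin (s2 - s1) (s3 - s2))).
    pose proof (Rmin_l eps (Rmin s1 (Rmin (s2 - s1) (s3 - s2)))).
    pose proof (Rmin_r eps (Rmin s1 (Rmin (s2 - s1) (s3 - s2)))).
    assert (0 < Rmin eps (Rmin s1 (Rmin (s2 - s1) (s3 - s2)))) by
      (repeat apply Rmin_glb_lt; lra).
    repeat split; lra. }
  set (k := m / 2).
  assert (sign_change : forall s, s = s1 \/ s = s2 \/ s = s3 ->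
    locally p0 (fun p => cubic (b p) (c p) (s - k) * cubic (b p) (c p) (s + k) < 0)).
  { intros s Hs. apply continuous_locally_neg.
    - apply (continuous_mult (K := R_AbsRing)); apply continuous_cubic_coeffs; auto.
    - apply (pos_roots_sign_change _ _ s1 s2 s3); unfold k; auto; lra. }
  generalize (filter_and _ _ (sign_change s1 (or_introl eq_refl))
    (filter_and _ _ (sign_change s2 (or_intror (or_introl eq_refl)))
      (sign_change s3 (or_intror (or_intror eq_refl))))).
  apply filter_imp. intros p (C1 & C2 & C3).
  destruct (pos_roots_between (b p) (c p) (s1 - k) (s1 + k) (s2 - k) (s2 + k) (s3 - k) (s3 + k))
    as (r1 & r2 & r3 & Hr & I1 & I2 & I3); unfold k in *; try split; try lra; auto.
  exists r1, r2, r3. split; [exact Hr|].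
  repeat split; apply Rabs_def1; lra.
Qed.


Lemma is_derive_mult_vanishing (g h : R -> R) x dg :
  g x = 0 -> is_derive g x dg -> continuous h x -> is_derive (fun y => g y * h y) x (dg * h x).
Proof.
  intros Z Dg Ch. apply is_derive_Reals in Dg. apply continuity_pt_filterlim in Ch.
  apply is_derive_Reals, (derivable_pt_lim_D_in _ (fun _ => dg * h x)).
  apply (derivable_pt_lim_D_in _ (fun _ => dg)) in Dg.
  intros eps Heps. destruct (limit_mul _ _ _ _ _ _ Dg Ch eps Heps) as [a [Ha Hlim]].
  exists a. split; [exact Ha|]. intros y Hy. specialize (Hlim y Hy). simpl in *.
  rewrite Z in Hlim |- *. unfold Rdiv in *. rewrite Rmult_0_l, Rminus_0_r in *.
  replace (g y * h y * / (y - x)) with (g y * / (y - x) * h y) by ring. exact Hlim.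
Qed.

Definition root_slope (b db dc s : R) : R := (dc - db * s) / dcubic b s.

Lemma is_derive_cubic_root (b c S : R -> R) p0 db dc :
  is_derive b p0 db -> is_derive c p0 dc -> continuous S p0 ->
  locally p0 (fun p => cubic (b p) (c p) (S p) = 0) -> dcubic (b p0) (S p0) <> 0 ->
  is_derive S p0 (root_slope (b p0) db dc (S p0)).
Proof.
  intros Db Dc CS Root N. set (s := S p0) in *.
  set (M := fun p => S p ^ 2 + S p * s + s ^ 2 - 2 * S p - 2 * s + b p).
  assert (CM : continuous M p0).
  { assert (Cb : continuous b p0) by
      (apply (ex_derive_continuous (V := R_NormedModule)); eexists; exact Db).
    apply (continuous_plus (V := R_NormedModule)
      (fun p => S p ^ 2 + S p * s + s ^ 2 - 2 * S p - 2 * s)); [|exact Cb].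
    apply (continuous_comp S (fun x => x ^ 2 + x * s + s ^ 2 - 2 * x - 2 * s)); [exact CS|].
    apply (ex_derive_continuous (V := R_NormedModule)). auto_derive. auto. }
  assert (M0 : M p0 = dcubic (b p0) s) by (unfold M, dcubic; fold s; ring).
  assert (NM : locally p0 (fun p => M p <> 0)).
  { destruct (Rdichotomy (M p0) 0) as [Hneg|Hpos]; [now rewrite M0|..].
    - eapply filter_imp; [|apply continuous_locally_neg; eauto]. intros; simpl; lra.
    - eapply filter_imp; [|apply continuous_locally_pos; eauto]. intros; simpl; lra. }
  (* subtracting the cubic equations at p0 and at p gives
     (S p - s) * M p = (c p - c p0) - (b p - b p0) * s *)
  apply (is_derive_ext_loc (fun p => s + (c p - c p0 - (b p - b p0) * s) * / M p)).
  { generalize (filter_and _ _ Root NM). apply filter_imp. intros p [Zp Mp].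
    assert (Z0 : cubic (b p0) (c p0) s = 0) by exact (locally_singleton _ _ Root).
    unfold cubic in Zp, Z0. unfold M in *.
    match goal with |- ?u = ?v => change (@eq R u v) end. field_simplify_eq; [|exact Mp]. nra. }
  assert (Dg : is_derive (fun p => c p - c p0 - (b p - b p0) * s) p0 (dc - db * s)).
  { auto_derive.
    - split; [eexists; exact Dc | split; [eexists; exact Db | exact I]].
    - replace (Derive (fun x : R => c x) p0) with dc by (symmetry; now apply is_derive_unique).
      replace (Derive (fun x : R => b x) p0) with db by (symmetry; now apply is_derive_unique).
      ring. }
  replace (root_slope (b p0) db dc s) with (0 + (dc - db * s) * / M p0)
    by (rewrite Rplus_0_l, M0; reflexivity).
  apply (is_derive_plus (V := R_NormedModule)); [now auto_derive|].
  apply (is_derive_mult_vanishing _ (fun p => / M p)); [ring | exact Dg |].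
  apply continuous_Rinv_comp; [exact CM | rewrite M0; exact N].
Qed.

(** * The period as a regular integral *)

Definition delta (s1 s2 s3 t : R) : R := s3 - s1 * cos t ^ 2 - s2 * sin t ^ 2.
Definition period_integrand (s1 s2 s3 t : R) : R := / sqrt (delta s1 s2 s3 t).
Definition period_integral (s1 s2 s3 : R) : R := RInt (period_integrand s1 s2 s3) 0 (PI / 2).

Lemma sin2_cos2_pow t : sin t ^ 2 + cos t ^ 2 = 1.
Proof. rewrite <- (sin2_cos2 t). unfold Rsqr. ring. Qed.

Lemma delta_pos s1 s2 s3 t : s1 < s3 -> s2 < s3 -> 0 < delta s1 s2 s3 t.
Proof.
  intros. unfold delta. pose proof (sin2_cos2_pow t).
  pose proof (Rmin_l (s3 - s1) (s3 - s2)). pose proof (Rmin_r (s3 - s1) (s3 - s2)).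
  pose proof (Rmin_glb_lt (s3 - s1) (s3 - s2) 0 ltac:(lra) ltac:(lra)).
  set (m := Rmin (s3 - s1) (s3 - s2)) in *.
  assert (0 <= (s3 - s1 - m) * cos t ^ 2) by (apply Rmult_le_pos; [lra | apply pow2_ge_0]).
  assert (0 <= (s3 - s2 - m) * sin t ^ 2) by (apply Rmult_le_pos; [lra | apply pow2_ge_0]).
  assert (s3 = s3 * (sin t ^ 2 + cos t ^ 2)) by (rewrite H1; ring).
  assert (m = m * (sin t ^ 2 + cos t ^ 2)) by (rewrite H1; ring).
  nra.
Qed.

Lemma period_integrand_continuous s1 s2 s3 t : s1 < s3 -> s2 < s3 ->
  continuous (period_integrand s1 s2 s3) t.
Proof.
  intros. pose proof (delta_pos s1 s2 s3 t H H0) as Hd.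
  apply (ex_derive_continuous (V := R_NormedModule)). unfold period_integrand, delta in *.
  auto_derive. repeat split; [lra | apply Rgt_not_eq, sqrt_lt_R0; lra].
Qed.

Lemma le_3_sin y : 0 <= y <= PI / 2 -> y <= 3 * sin y.
Proof.
  intros Hy. pose proof PI_4.
  destruct (SIN y ltac:(lra) ltac:(lra)) as [Hlb _].
  unfold sin_lb, sin_approx, sin_term in Hlb. simpl in Hlb.
  assert (y * y <= 4) by nra.
  assert (0 <= y * (y * y) * (y * y) * (1 / 120 - y * y / 5040)) by
    (repeat apply Rmult_le_pos; nra).
  nra.
Qed.

Lemma locally_pair_le {U V : UniformSpace} (x : U) (y : V) :
  filter_le (filter_prod (locally x) (locally y)) (locally (x, y)).
Proof.
  intros P [eps H]. apply (Filter_prod _ _ _ (ball x eps) (ball y eps));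
    [exists eps; auto | exists eps; auto |].
  intros u v Hu Hv. apply H. split; assumption.
Qed.

Lemma continuous_RInt_bounds (f : R -> R) (z : R * R) : (forall x, continuous f x) ->
  continuous (fun z : R * R => RInt f (fst z) (snd z)) z.
Proof.
  intros Hf. destruct z as [a b].
  apply (continuous_RInt (V := R_CompleteNormedModule) f a b (fun u v => RInt f u v)).
  apply filter_forall. intros z. apply (RInt_correct (V := R_CompleteNormedModule)).
  apply (ex_RInt_continuous (V := R_CompleteNormedModule)). auto.
Qed.

Definition inv_radial_speed (J E r : R) : R := / sqrt (2 * (E - V J r)).

Lemma inv_radial_speed_continuous J E r : 0 < r -> 0 < E - V J r ->
  continuous (inv_radial_speed J E) r.
Proof.
  intros Hr He. apply (ex_derive_continuous (V := R_NormedModule)).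
  unfold inv_radial_speed, V in *. auto_derive. simpl in He.
  repeat split; [nra | lra | apply Rgt_not_eq, sqrt_lt_R0; lra].
Qed.

Section Substitution.

Variables J E s1 s2 s3 : R.
Hypothesis roots_s : pos_roots (4 * E) (2 * J ^ 2) s1 s2 s3.

Let s1_pos : 0 < s1. Proof. apply roots_s. Qed.
Let s1_lt_s2 : s1 < s2. Proof. apply roots_s. Qed.
Let s2_lt_s3 : s2 < s3. Proof. apply roots_s. Qed.

Definition radius (t : R) : R := sqrt (s1 * cos t ^ 2 + s2 * sin t ^ 2).
Definition dradius (t : R) : R := (s2 - s1) * sin t * cos t / radius t.

Lemma radius_sq_bounds t : s1 <= s1 * cos t ^ 2 + s2 * sin t ^ 2 <= s2.
Proof.
  pose proof (sin2_cos2_pow t).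
  pose proof (pow2_ge_0 (sin t)). pose proof (pow2_ge_0 (cos t)). nra.
Qed.

Lemma radius_pos t : 0 < radius t.
Proof. apply sqrt_lt_R0. pose proof (radius_sq_bounds t). lra. Qed.

Lemma radius_is_derive t : is_derive radius t (dradius t).
Proof.
  pose proof (radius_sq_bounds t). pose proof (radius_pos t).
  unfold dradius. unfold radius in *. auto_derive; [lra|].
  match goal with |- ?u = ?v => change (@eq R u v) end. simpl in *. field. lra.
Qed.

Lemma dradius_continuous t : continuous dradius t.
Proof.
  pose proof (radius_sq_bounds t). pose proof (radius_pos t).
  apply (ex_derive_continuous (V := R_NormedModule)). unfold dradius. unfold radius in *.
  auto_derive. simpl in *. repeat split; lra.
Qed.

Lemma E_minus_V_radius t : E - V J (radius t) =
  (s2 - s1) ^ 2 * sin t ^ 2 * cos t ^ 2 * delta s1 s2 s3 t / (4 * radius t ^ 2).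
Proof.
  pose proof (radius_sq_bounds t). pose proof (sin2_cos2_pow t).
  rewrite V_cubic by apply radius_pos. unfold radius. rewrite pow2_sqrt by lra.
  rewrite (pos_roots_factor _ _ _ _ _ roots_s). unfold delta.
  replace (cos t ^ 2) with (1 - sin t ^ 2) in * by lra. field. lra.
Qed.

Lemma E_minus_V_radius_pos t : 0 < t < PI / 2 -> 0 < E - V J (radius t).
Proof.
  intros Ht.
  assert (0 < sin t) by (apply sin_gt_0; lra).
  assert (0 < cos t) by (apply cos_gt_0; lra).
  pose proof (delta_pos s1 s2 s3 t ltac:(lra) s2_lt_s3). pose proof (radius_pos t).
  rewrite E_minus_V_radius. apply Rdiv_lt_0_compat; [|nra].
  repeat apply Rmult_lt_0_compat; try apply pow_lt; lra.
Qed.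

Lemma dradius_inv_radial_speed t : 0 < t < PI / 2 ->
  dradius t * inv_radial_speed J E (radius t) = sqrt 2 * period_integrand s1 s2 s3 t.
Proof.
  intros Ht.
  assert (Hs : 0 < sin t) by (apply sin_gt_0; lra).
  assert (Hc : 0 < cos t) by (apply cos_gt_0; lra).
  pose proof (delta_pos s1 s2 s3 t ltac:(lra) s2_lt_s3) as Hd.
  pose proof (radius_pos t) as Hr.
  pose proof (E_minus_V_radius_pos t Ht) as He.
  assert (Hdr : 0 < dradius t) by
    (unfold dradius; apply Rdiv_lt_0_compat; [repeat apply Rmult_lt_0_compat|]; lra).
  assert (0 < sqrt 2) by (apply sqrt_lt_R0; lra).
  assert (0 < sqrt (delta s1 s2 s3 t)) by (apply sqrt_lt_R0; lra).
  assert (0 < sqrt (2 * (E - V J (radius t)))) by (apply sqrt_lt_R0; lra).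
  unfold inv_radial_speed, period_integrand.
  apply Rsqr_inj.
  - apply Rmult_le_pos; [lra | left; apply Rinv_0_lt_compat; lra].
  - apply Rmult_le_pos; [lra | left; apply Rinv_0_lt_compat; lra].
  - rewrite !Rsqr_mult, !Rsqr_inv', !Rsqr_sqrt by lra.
    rewrite E_minus_V_radius. unfold dradius, Rsqr. field. repeat split; lra.
Qed.

Lemma E_minus_V_pos r : sqrt s1 < r < sqrt s2 -> 0 < E - V J r.
Proof.
  intros Hr. pose proof (sqrt_pos s1).
  pose proof (pow2_sqrt s1 ltac:(lra)). pose proof (pow2_sqrt s2 ltac:(lra)).
  assert (s1 < r ^ 2 < s2) by (split; nra).
  rewrite V_cubic by lra. rewrite (pos_roots_factor _ _ _ _ _ roots_s).
  apply Rdiv_lt_0_compat; [|nra].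
  assert (0 < (r ^ 2 - s1) * (s2 - r ^ 2)) by nra. nra.
Qed.

Definition angle (a : R) : R := asin (sqrt ((a ^ 2 - s1) / (s2 - s1))).

Lemma angle_spec a : sqrt s1 < a < sqrt s2 ->
  0 < angle a < PI / 2 /\ radius (angle a) = a /\
  sin (angle a) = sqrt ((a ^ 2 - s1) / (s2 - s1)) /\
  cos (angle a) = sqrt (1 - (a ^ 2 - s1) / (s2 - s1)).
Proof.
  intros Ha. pose proof (sqrt_pos s1).
  pose proof (pow2_sqrt s1 ltac:(lra)). pose proof (pow2_sqrt s2 ltac:(lra)).
  assert (s1 < a ^ 2 < s2) by (split; nra).
  set (x := (a ^ 2 - s1) / (s2 - s1)).
  assert (Hx : 0 < x < 1).
  { unfold x. split; [apply Rdiv_lt_0_compat; lra|].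
    apply (Rmult_lt_reg_r (s2 - s1)); [lra|]. field_simplify; lra. }
  set (w := sqrt x).
  assert (Hw : 0 < w < 1).
  { unfold w. split; [apply sqrt_lt_R0; lra|]. rewrite <- sqrt_1. apply sqrt_lt_1; lra. }
  assert (Hw2 : w ^ 2 = x) by (apply pow2_sqrt; lra).
  assert (Hsin : sin (angle a) = w) by (apply sin_asin; lra).
  assert (Hcos : cos (angle a) = sqrt (1 - x)).
  { unfold angle. fold x w. rewrite cos_asin by lra. f_equal. unfold Rsqr. lra. }
  assert (Hb := asin_bound_lt w ltac:(lra)). fold x w in Hb |- *.
  assert (Hpos : 0 < asin w).
  { apply Rnot_le_lt. intros Hle. pose proof PI_RGT_0.
    pose proof (sin_ge_0 (- asin w) ltac:(lra) ltac:(lra)).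
    rewrite sin_neg, sin_asin in * by lra. lra. }
  split; [unfold angle; fold x w; lra|]. split; [|split; [exact Hsin | exact Hcos]].
  unfold radius. rewrite Hsin, Hcos, Hw2, pow2_sqrt by lra.
  replace (s1 * (1 - x) + s2 * x) with (a ^ 2) by (unfold x; field; lra).
  apply sqrt_pow2. lra.
Qed.

Lemma is_RInt_inv_radial_speed a b : sqrt s1 < a < sqrt s2 -> sqrt s1 < b < sqrt s2 ->
  is_RInt (inv_radial_speed J E) a b
    (sqrt 2 * RInt (period_integrand s1 s2 s3) (angle a) (angle b)).
Proof.
  intros Ha Hb.
  destruct (angle_spec a Ha) as (Aa & Ra & _). destruct (angle_spec b Hb) as (Ab & Rb & _).
  assert (inside : forall x, Rmin (angle a) (angle b) <= x <= Rmax (angle a) (angle b) ->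
    0 < x < PI / 2).
  { intros x Hx. split.
    - apply (Rlt_le_trans _ (Rmin (angle a) (angle b))); [apply Rmin_glb_lt|]; lra.
    - apply (Rle_lt_trans _ (Rmax (angle a) (angle b))); [|apply Rmax_lub_lt]; lra. }
  assert (Sub := is_RInt_comp (V := R_CompleteNormedModule) (inv_radial_speed J E)
    radius dradius (angle a) (angle b)).
  rewrite Ra, Rb in Sub. specialize (Sub
    (fun x Hx => inv_radial_speed_continuous J E _ (radius_pos x)
       (E_minus_V_radius_pos x (inside x Hx)))
    (fun x _ => conj (radius_is_derive x) (dradius_continuous x))).
  assert (Eq_int : RInt (inv_radial_speed J E) a b =
    sqrt 2 * RInt (period_integrand s1 s2 s3) (angle a) (angle b)).
  { rewrite <- (RInt_scal (V := R_CompleteNormedModule)).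
    2: { apply (ex_RInt_continuous (V := R_CompleteNormedModule)). intros.
         apply period_integrand_continuous; lra. }
    symmetry. apply is_RInt_unique. apply (is_RInt_ext (V := R_NormedModule)) with (2 := Sub).
    intros x Hx. apply dradius_inv_radial_speed, inside. lra. }
  rewrite <- Eq_int. apply (RInt_correct (V := R_CompleteNormedModule)).
  apply (ex_RInt_continuous (V := R_CompleteNormedModule)). intros z Hz.
  assert (sqrt s1 < z < sqrt s2).
  { split.
    - apply (Rlt_le_trans _ (Rmin a b)); [apply Rmin_glb_lt|]; lra.
    - apply (Rle_lt_trans _ (Rmax a b)); [|apply Rmax_lub_lt]; lra. }
  apply inv_radial_speed_continuous; [pose proof (sqrt_pos s1); lra | now apply E_minus_V_pos].
Qed.

Lemma at_right_between : at_right (sqrt s1) (fun a => sqrt s1 < a < sqrt s2).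
Proof.
  assert (sqrt s1 < sqrt s2) by (apply sqrt_lt_1; lra).
  exists (mkposreal _ (proj2 (Rlt_0_minus _ _) H)). intros a Ha Hlt.
  change (Rabs (a - sqrt s1) < sqrt s2 - sqrt s1) in Ha. apply Rabs_def2 in Ha. simpl. lra.
Qed.

Lemma at_left_between : at_left (sqrt s2) (fun b => sqrt s1 < b < sqrt s2).
Proof.
  assert (sqrt s1 < sqrt s2) by (apply sqrt_lt_1; lra).
  exists (mkposreal _ (proj2 (Rlt_0_minus _ _) H)). intros b Hb Hlt.
  change (Rabs (b - sqrt s2) < sqrt s2 - sqrt s1) in Hb. apply Rabs_def2 in Hb. simpl. lra.
Qed.

Lemma angle_at_right : filterlim angle (at_right (sqrt s1)) (locally 0).
Proof.
  apply (filterlim_le_le (fun _ => 0) angle (fun a => 3 * sqrt ((a ^ 2 - s1) / (s2 - s1))) 0).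
  - eapply filter_imp; [|apply at_right_between]. intros a Ha.
    destruct (angle_spec a Ha) as (Aa & _ & Sa & _). rewrite <- Sa.
    split; [lra | apply le_3_sin; lra].
  - apply filterlim_const.
  - apply (filterlim_filter_le_1 _ (filter_le_within _)).
    replace (Rbar_locally 0) with (locally (3 * sqrt ((sqrt s1 ^ 2 - s1) / (s2 - s1)))).
    + apply (continuous_scal_r (K := R_AbsRing) 3 (fun a => sqrt ((a ^ 2 - s1) / (s2 - s1)))).
      apply continuous_sqrt_comp, (ex_derive_continuous (V := R_NormedModule)).
      auto_derive. lra.
    + rewrite pow2_sqrt, Rminus_diag, Rdiv_0_l, sqrt_0, Rmult_0_r by lra. reflexivity.
Qed.

Lemma angle_at_left : filterlim angle (at_left (sqrt s2)) (locally (PI / 2)).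
Proof.
  apply (filterlim_le_le (fun b => PI / 2 - 3 * sqrt (1 - (b ^ 2 - s1) / (s2 - s1))) angle
    (fun _ => PI / 2) (PI / 2)).
  - eapply filter_imp; [|apply at_left_between]. intros b Hb.
    destruct (angle_spec b Hb) as (Ab & _ & _ & Cb). rewrite <- Cb, <- sin_shift.
    pose proof (le_3_sin (PI / 2 - angle b) ltac:(lra)). lra.
  - apply (filterlim_filter_le_1 _ (filter_le_within _)).
    replace (Rbar_locally (PI / 2))
      with (locally (PI / 2 - 3 * sqrt (1 - (sqrt s2 ^ 2 - s1) / (s2 - s1)))).
    + change (continuous (fun b => PI / 2 - 3 * sqrt (1 - (b ^ 2 - s1) / (s2 - s1))) (sqrt s2)).
      apply (continuous_minus (V := R_NormedModule) (fun _ => PI / 2)); [apply continuous_const|].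
      apply (continuous_scal_r (K := R_AbsRing) 3 (fun a => sqrt (1 - (a ^ 2 - s1) / (s2 - s1)))).
      apply continuous_sqrt_comp, (ex_derive_continuous (V := R_NormedModule)).
      auto_derive. lra.
    + rewrite pow2_sqrt by lra. replace (1 - (s2 - s1) / (s2 - s1)) with 0 by (field; lra).
      rewrite sqrt_0, Rmult_0_r, Rminus_0_r. reflexivity.
  - apply filterlim_const.
Qed.

Lemma is_RInt_gen_inv_radial_speed :
  is_RInt_gen (inv_radial_speed J E) (at_right (sqrt s1)) (at_left (sqrt s2))
    (sqrt 2 * period_integral s1 s2 s3).
Proof.
  apply (filterlimi_lim_ext_loc
    (fun ab => sqrt 2 * RInt (period_integrand s1 s2 s3) (angle (fst ab)) (angle (snd ab)))).
  - apply (Filter_prod _ _ _ _ _ at_right_between at_left_between).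
    intros a b Ha Hb. now apply is_RInt_inv_radial_speed.
  - apply (filterlim_comp_2 (G := locally 0) (H := locally (PI / 2))
      (fun ab => angle (fst ab)) (fun ab => angle (snd ab))
      (fun u v => sqrt 2 * RInt (period_integrand s1 s2 s3) u v)).
    + eapply filterlim_comp; [apply filterlim_fst | apply angle_at_right].
    + eapply filterlim_comp; [apply filterlim_snd | apply angle_at_left].
    + apply (filterlim_filter_le_1 _ (locally_pair_le 0 (PI / 2))).
      apply (filterlim_comp _ _ _
        (fun z : R * R => RInt (period_integrand s1 s2 s3) (fst z) (snd z))
        (fun y => sqrt 2 * y) _ (locally (period_integral s1 s2 s3))).
      * apply (continuous_RInt_bounds _ (0, PI / 2)). intros.
        apply period_integrand_continuous; lra.
      * apply (ex_derive_continuous (V := R_NormedModule) (fun y => sqrt 2 * y)). auto_derive. auto.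
Qed.

End Substitution.

Lemma T_period_integral J E s1 s2 s3 : pos_roots (4 * E) (2 * J ^ 2) s1 s2 s3 ->
  T J E = 2 * sqrt 2 * period_integral s1 s2 s3.
Proof.
  intros H. unfold T. rewrite (roots_of_pos_roots _ _ _ _ _ H), Rmult_assoc. f_equal.
  apply (is_RInt_gen_unique (V := R_CompleteNormedModule)).
  exact (is_RInt_gen_inv_radial_speed J E s1 s2 s3 H).
Qed.

(** * Differentiation under the integral sign *)

Definition period_integrand_slope (s1 s2 s3 x1 x2 x3 t : R) : R :=
  - delta x1 x2 x3 t / (2 * (delta s1 s2 s3 t * sqrt (delta s1 s2 s3 t))).

Definition period_slope (s1 s2 s3 x1 x2 x3 : R) : R :=
  RInt (period_integrand_slope s1 s2 s3 x1 x2 x3) 0 (PI / 2).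

Lemma period_integrand_is_derive (S1 S2 S3 : R -> R) x1 x2 x3 p t :
  S1 p < S3 p -> S2 p < S3 p ->
  is_derive S1 p x1 -> is_derive S2 p x2 -> is_derive S3 p x3 ->
  is_derive (fun u => period_integrand (S1 u) (S2 u) (S3 u) t) p
    (period_integrand_slope (S1 p) (S2 p) (S3 p) x1 x2 x3 t).
Proof.
  intros H13 H23 D1 D2 D3. pose proof (delta_pos _ _ _ t H13 H23) as Hd.
  assert (Hs : 0 < sqrt (delta (S1 p) (S2 p) (S3 p) t)) by (apply sqrt_lt_R0; lra).
  assert (Ddelta : is_derive (fun u => delta (S1 u) (S2 u) (S3 u) t) p (delta x1 x2 x3 t)).
  { unfold delta. auto_derive; [repeat split; eexists; eassumption|].
    replace (Derive (fun x : R => S1 x) p) with x1 by (symmetry; now apply is_derive_unique).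
    replace (Derive (fun x : R => S2 x) p) with x2 by (symmetry; now apply is_derive_unique).
    replace (Derive (fun x : R => S3 x) p) with x3 by (symmetry; now apply is_derive_unique).
    match goal with |- ?u = ?v => change (@eq R u v) end. ring. }
  assert (Dinvsqrt : is_derive (fun y => / sqrt y) (delta (S1 p) (S2 p) (S3 p) t)
    (- / (2 * (delta (S1 p) (S2 p) (S3 p) t * sqrt (delta (S1 p) (S2 p) (S3 p) t))))).
  { auto_derive; [repeat split; lra|].
    match goal with |- ?u = ?v => change (@eq R u v) end.
    rewrite sqrt_sqrt by lra. field. lra. }
  pose proof (is_derive_comp (fun y => / sqrt y) (fun u => delta (S1 u) (S2 u) (S3 u) t) p _ _
    Dinvsqrt Ddelta) as Dcomp.
  unfold period_integrand, period_integrand_slope.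
  replace (- delta x1 x2 x3 t / _) with (scal (delta x1 x2 x3 t)
    (- / (2 * (delta (S1 p) (S2 p) (S3 p) t * sqrt (delta (S1 p) (S2 p) (S3 p) t))))).
  - exact Dcomp.
  - change (scal ?a ?b) with (a * b). unfold Rdiv.
    match goal with |- ?u = ?v => change (@eq R u v) end. ring.
Qed.

Lemma continuity_2d_pt_fst (f : R -> R) u t : continuous f u ->
  continuity_2d_pt (fun u _ => f u) u t.
Proof.
  intros H. apply (continuity_1d_2d_pt_comp f (fun u _ => u)); [|apply continuity_2d_pt_id1].
  now apply continuity_pt_filterlim.
Qed.

Lemma continuity_2d_pt_delta (a1 a2 a3 : R -> R) u t :
  continuous a1 u -> continuous a2 u -> continuous a3 u ->
  continuity_2d_pt (fun u t => delta (a1 u) (a2 u) (a3 u) t) u t.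
Proof.
  intros C1 C2 C3.
  assert (Ctrig : forall g : R -> R, (forall t, ex_derive g t) ->
    continuity_2d_pt (fun _ t => g t) u t).
  { intros g Dg. apply (continuity_1d_2d_pt_comp g (fun _ t => t)); [|apply continuity_2d_pt_id2].
    apply continuity_pt_filterlim, (ex_derive_continuous (V := R_NormedModule)), Dg. }
  unfold delta. repeat apply continuity_2d_pt_minus.
  - now apply continuity_2d_pt_fst.
  - apply continuity_2d_pt_mult; [now apply continuity_2d_pt_fst|].
    apply (Ctrig (fun t => cos t ^ 2)). intros. auto_derive. auto.
  - apply continuity_2d_pt_mult; [now apply continuity_2d_pt_fst|].
    apply (Ctrig (fun t => sin t ^ 2)). intros. auto_derive. auto.
Qed.

Lemma continuity_2d_pt_period_integrand_slope (S1 S2 S3 x1 x2 x3 : R -> R) u t :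
  continuous S1 u -> continuous S2 u -> continuous S3 u ->
  continuous x1 u -> continuous x2 u -> continuous x3 u ->
  S1 u < S3 u -> S2 u < S3 u ->
  continuity_2d_pt
    (fun u t => period_integrand_slope (S1 u) (S2 u) (S3 u) (x1 u) (x2 u) (x3 u) t) u t.
Proof.
  intros C1 C2 C3 Cx1 Cx2 Cx3 H13 H23.
  pose proof (delta_pos _ _ _ t H13 H23) as Hd.
  pose proof (continuity_2d_pt_delta _ _ _ u t C1 C2 C3) as Cd.
  unfold period_integrand_slope, Rdiv. apply continuity_2d_pt_mult.
  - now apply continuity_2d_pt_opp, continuity_2d_pt_delta.
  - apply continuity_2d_pt_inv.
    + apply continuity_2d_pt_mult; [apply continuity_2d_pt_const|].
      apply continuity_2d_pt_mult; [exact Cd|].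
      apply (continuity_1d_2d_pt_comp sqrt); [apply continuity_pt_sqrt; lra | exact Cd].
    + assert (0 < sqrt (delta (S1 u) (S2 u) (S3 u) t)) by (apply sqrt_lt_R0; lra).
      apply Rgt_not_eq. repeat apply Rmult_lt_0_compat; lra.
Qed.

Lemma is_derive_period_integral (S1 S2 S3 dS1 dS2 dS3 : R -> R) p0 :
  locally p0 (fun p => S1 p < S3 p /\ S2 p < S3 p /\
    is_derive S1 p (dS1 p) /\ is_derive S2 p (dS2 p) /\ is_derive S3 p (dS3 p)) ->
  continuous dS1 p0 -> continuous dS2 p0 -> continuous dS3 p0 ->
  is_derive (fun p => period_integral (S1 p) (S2 p) (S3 p)) p0
    (period_slope (S1 p0) (S2 p0) (S3 p0) (dS1 p0) (dS2 p0) (dS3 p0)).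
Proof.
  intros Hloc Cx1 Cx2 Cx3.
  pose proof (locally_singleton _ _ Hloc) as (H13 & H23 & D1 & D2 & D3).
  assert (Dt : locally p0 (fun p => forall t, is_derive
    (fun u => period_integrand (S1 u) (S2 u) (S3 u) t) p
    (period_integrand_slope (S1 p) (S2 p) (S3 p) (dS1 p) (dS2 p) (dS3 p) t))).
  { eapply filter_imp; [|exact Hloc]. intros p (? & ? & ? & ? & ?) t.
    now apply period_integrand_is_derive. }
  replace (period_slope _ _ _ _ _ _) with
    (RInt (fun t => Derive (fun u => period_integrand (S1 u) (S2 u) (S3 u) t) p0) 0 (PI / 2)).
  2: { apply RInt_ext. intros t _. apply is_derive_unique, (locally_singleton _ _ Dt). }
  apply (is_derive_RInt_param (fun u t => period_integrand (S1 u) (S2 u) (S3 u) t)).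
  - eapply filter_imp; [|exact Dt]. intros p Dp t _. eexists. apply Dp.
  - intros t _.
    apply (continuity_2d_pt_ext_loc (fun u t =>
      period_integrand_slope (S1 u) (S2 u) (S3 u) (dS1 u) (dS2 u) (dS3 u) t)).
    + destruct Dt as [d Hd]. exists d. intros u v Hu _. symmetry.
      apply is_derive_unique, Hd, Hu.
    + apply continuity_2d_pt_period_integrand_slope; auto;
        apply (ex_derive_continuous (V := R_NormedModule)); eexists; eassumption.
  - eapply filter_imp; [|exact Hloc]. intros p (? & ? & _).
    apply (ex_RInt_continuous (V := R_CompleteNormedModule)). intros.
    now apply period_integrand_continuous.
Qed.

(** * Sign of the derivative *)

Lemma continuous_reflect (f : R -> R) a b x : (forall x, continuous f x) ->
  continuous (fun y => f (a + b - y)) x.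
Proof.
  intros Cf. apply (continuous_comp (fun y => a + b - y) f); [|apply Cf].
  apply (ex_derive_continuous (V := R_NormedModule)). auto_derive. auto.
Qed.

Lemma RInt_reflect (f : R -> R) a b : (forall x, continuous f x) ->
  RInt (fun y => f (a + b - y)) a b = RInt f a b.
Proof.
  intros Cf. pose proof (fun x => continuous_reflect f a b x Cf) as Cg.
  assert (Hlin := RInt_comp_lin (V := R_CompleteNormedModule) f (-1) (a + b) a b).
  replace (-1 * a + (a + b)) with b in Hlin by ring.
  replace (-1 * b + (a + b)) with a in Hlin by ring.
  rewrite <- (opp_RInt_swap (V := R_CompleteNormedModule) f a b) in Hlin
    by (apply (ex_RInt_continuous (V := R_CompleteNormedModule)); auto).
  rewrite (RInt_ext _ (fun y => scal (-1) (f (a + b - y)))) in Hlin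
    by (intros x _; do 2 f_equal; ring).
  rewrite (RInt_scal (V := R_CompleteNormedModule)) in Hlin
    by (apply (ex_RInt_continuous (V := R_CompleteNormedModule)); auto).
  change (scal ?k ?u) with (k * u) in Hlin. change (opp ?u) with (- u) in Hlin.
  enough (-1 * RInt (fun y => f (a + b - y)) a b = - RInt f a b) by lra. apply Hlin.
  apply (ex_RInt_continuous (V := R_CompleteNormedModule)). intros. apply Cf.
Qed.

Lemma RInt_plus_reflect (f : R -> R) a b : (forall x, continuous f x) ->
  RInt (fun y => f y + f (a + b - y)) a b = 2 * RInt f a b.
Proof.
  intros Cf. pose proof (fun x => continuous_reflect f a b x Cf) as Cg.
  rewrite (RInt_plus (V := R_CompleteNormedModule) f (fun y => f (a + b - y)));
    try (apply (ex_RInt_continuous (V := R_CompleteNormedModule)); auto).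
  change plus with Rplus. rewrite RInt_reflect by exact Cf.
  match goal with |- ?u = ?v => change (@eq R u v) end. ring.
Qed.

Lemma RInt_pos (f : R -> R) a b : a < b -> (forall x, continuous f x) ->
  (forall x, a < x < b -> 0 < f x) -> 0 < RInt f a b.
Proof.
  intros Hab Cf Hf.
  apply (Rle_lt_trans _ (RInt (fun _ => 0) a b)).
  - rewrite (RInt_const (V := R_CompleteNormedModule)). change (scal (b - a) 0) with ((b - a) * 0).
    lra.
  - apply RInt_lt; auto. intros. apply continuous_const.
Qed.

Lemma inv_pow3_2_le a b : 0 < a <= b -> / (b * sqrt b) <= / (a * sqrt a).
Proof.
  intros Hab. assert (0 < sqrt a) by (apply sqrt_lt_R0; lra).
  assert (sqrt a <= sqrt b) by (apply sqrt_le_1; lra).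
  apply Rinv_le_contravar; [nra | apply Rmult_le_compat; lra].
Qed.

Section Sign.

Variables s1 s2 s3 : R.
Hypotheses (s1_lt_s2 : s1 < s2) (s2_lt_s3 : s2 < s3).

Definition weight (t : R) : R := / (delta s1 s2 s3 t * sqrt (delta s1 s2 s3 t)).

Lemma weight_pos t : 0 < weight t.
Proof.
  pose proof (delta_pos s1 s2 s3 t ltac:(lra) s2_lt_s3).
  apply Rinv_0_lt_compat, Rmult_lt_0_compat; [|apply sqrt_lt_R0]; lra.
Qed.

Lemma weight_continuous t : continuous weight t.
Proof.
  pose proof (delta_pos s1 s2 s3 t ltac:(lra) s2_lt_s3) as Hd.
  assert (0 < sqrt (delta s1 s2 s3 t)) by (apply sqrt_lt_R0; lra).
  apply (ex_derive_continuous (V := R_NormedModule)). unfold weight.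
  assert (Dd : ex_derive (delta s1 s2 s3) t) by (unfold delta; auto_derive; auto).
  auto_derive. repeat split; try exact Dd; [lra | apply Rgt_not_eq, Rmult_lt_0_compat; lra].
Qed.

Lemma weight_reflect t :
  (cos t ^ 2 - sin t ^ 2) * (weight t - weight (PI / 2 - t)) <= 0.
Proof.
  assert (Dt := delta_pos s1 s2 s3 t ltac:(lra) s2_lt_s3).
  assert (Ds := delta_pos s2 s1 s3 t s2_lt_s3 ltac:(lra)).
  assert (Refl : delta s1 s2 s3 (PI / 2 - t) = delta s2 s1 s3 t)
    by (unfold delta; rewrite sin_shift, cos_shift; ring).
  unfold weight. rewrite Refl.
  assert (Diff : delta s1 s2 s3 t - delta s2 s1 s3 t = (s2 - s1) * (cos t ^ 2 - sin t ^ 2))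
    by (unfold delta; ring).
  destruct (Rle_or_lt 0 (cos t ^ 2 - sin t ^ 2)) as [Hcs|Hcs].
  - assert (/ (delta s1 s2 s3 t * sqrt (delta s1 s2 s3 t)) <=
      / (delta s2 s1 s3 t * sqrt (delta s2 s1 s3 t))) by (apply inv_pow3_2_le; nra).
    nra.
  - assert (/ (delta s2 s1 s3 t * sqrt (delta s2 s1 s3 t)) <=
      / (delta s1 s2 s3 t * sqrt (delta s1 s2 s3 t))) by (apply inv_pow3_2_le; nra).
    nra.
Qed.

Lemma continuous_mult_weight (g : R -> R) t : ex_derive g t ->
  continuous (fun t => g t * weight t) t.
Proof.
  intros Dg. apply (continuous_mult (K := R_AbsRing) g); [|apply weight_continuous].
  now apply (ex_derive_continuous (V := R_NormedModule)).
Qed.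

Lemma RInt_sin2_weight_pos : 0 < RInt (fun t => sin t ^ 2 * weight t) 0 (PI / 2).
Proof.
  pose proof PI2_1. apply RInt_pos; [lra| |].
  - intros t. apply (continuous_mult_weight (fun t => sin t ^ 2)). auto_derive. auto.
  - intros t Ht. apply Rmult_lt_0_compat; [apply pow_lt, sin_gt_0 | apply weight_pos]; lra.
Qed.

Lemma RInt_cos2_weight_pos : 0 < RInt (fun t => cos t ^ 2 * weight t) 0 (PI / 2).
Proof.
  pose proof PI2_1. apply RInt_pos; [lra| |].
  - intros t. apply (continuous_mult_weight (fun t => cos t ^ 2)). auto_derive. auto.
  - intros t Ht. apply Rmult_lt_0_compat; [apply pow_lt, cos_gt_0 | apply weight_pos]; lra.
Qed.

Lemma RInt_cos2_weight_le_sin2 :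
  RInt (fun t => cos t ^ 2 * weight t) 0 (PI / 2) <=
  RInt (fun t => sin t ^ 2 * weight t) 0 (PI / 2).
Proof.
  pose proof PI2_1.
  assert (Cc : forall t, continuous (fun t => cos t ^ 2 * weight t) t).
  { intros t. apply (continuous_mult_weight (fun t => cos t ^ 2)). auto_derive. auto. }
  assert (Cs : forall t, continuous (fun t => sin t ^ 2 * weight t) t).
  { intros t. apply (continuous_mult_weight (fun t => sin t ^ 2)). auto_derive. auto. }
  apply (Rmult_le_reg_l 2); [lra|].
  rewrite <- !(RInt_plus_reflect _ 0 (PI / 2)) by assumption.
  apply RInt_le; [lra | | |].
  - apply (ex_RInt_continuous (V := R_CompleteNormedModule)). intros.
    apply (continuous_plus (V := R_NormedModule)); [apply Cc|].
    exact (continuous_reflect (fun t => cos t ^ 2 * weight t) _ _ _ Cc).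
  - apply (ex_RInt_continuous (V := R_CompleteNormedModule)). intros.
    apply (continuous_plus (V := R_NormedModule)); [apply Cs|].
    exact (continuous_reflect (fun t => sin t ^ 2 * weight t) _ _ _ Cs).
  - intros t _. replace (0 + PI / 2 - t) with (PI / 2 - t) by ring.
    rewrite sin_shift, cos_shift. pose proof (weight_reflect t). nra.
Qed.

Lemma period_slope_eq x1 x2 x3 : period_slope s1 s2 s3 x1 x2 x3 =
  (x1 - x3) / 2 * RInt (fun t => cos t ^ 2 * weight t) 0 (PI / 2) +
  (x2 - x3) / 2 * RInt (fun t => sin t ^ 2 * weight t) 0 (PI / 2).
Proof.
  assert (Ex : forall g : R -> R, (forall t, ex_derive g t) ->
    ex_RInt (fun t => g t * weight t) 0 (PI / 2)).
  { intros g Dg. apply (ex_RInt_continuous (V := R_CompleteNormedModule)). intros.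
    now apply continuous_mult_weight. }
  unfold period_slope.
  rewrite (RInt_ext _ (fun t => (x1 - x3) / 2 * (cos t ^ 2 * weight t) +
    (x2 - x3) / 2 * (sin t ^ 2 * weight t))).
  - rewrite (RInt_plus (V := R_CompleteNormedModule)), !(RInt_scal (V := R_CompleteNormedModule)).
    + reflexivity.
    + apply (Ex (fun t => sin t ^ 2)). intros. auto_derive. auto.
    + apply (Ex (fun t => cos t ^ 2)). intros. auto_derive. auto.
    + apply (ex_RInt_scal (V := R_NormedModule)), (Ex (fun t => cos t ^ 2)).
      intros. auto_derive. auto.
    + apply (ex_RInt_scal (V := R_NormedModule)), (Ex (fun t => sin t ^ 2)).
      intros. auto_derive. auto.
  - intros t _. pose proof (delta_pos s1 s2 s3 t ltac:(lra) s2_lt_s3).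
    assert (0 < sqrt (delta s1 s2 s3 t)) by (apply sqrt_lt_R0; lra).
    unfold period_integrand_slope, weight, delta at 1.
    rewrite <- (Rmult_1_r x3) at 1. rewrite <- (sin2_cos2_pow t).
    match goal with |- ?u = ?v => change (@eq R u v) end. field. split; lra.
Qed.

Lemma period_slope_pos x1 x2 x3 : 0 < x2 - x3 -> 0 < x1 + x2 - 2 * x3 ->
  0 < period_slope s1 s2 s3 x1 x2 x3.
Proof.
  intros. rewrite period_slope_eq.
  pose proof RInt_cos2_weight_pos. pose proof RInt_sin2_weight_pos.
  pose proof RInt_cos2_weight_le_sin2.
  destruct (Rle_or_lt x3 x1); nra.
Qed.

Lemma period_slope_neg x1 x2 x3 : x2 - x3 < 0 -> x1 + x2 - 2 * x3 < 0 ->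
  period_slope s1 s2 s3 x1 x2 x3 < 0.
Proof.
  intros. rewrite period_slope_eq.
  pose proof RInt_cos2_weight_pos. pose proof RInt_sin2_weight_pos.
  pose proof RInt_cos2_weight_le_sin2.
  destruct (Rle_or_lt x1 x3); nra.
Qed.

End Sign.

Lemma root_slopes_sum b c s1 s2 s3 db dc : pos_roots b c s1 s2 s3 ->
  root_slope b db dc s1 + root_slope b db dc s2 + root_slope b db dc s3 = 0.
Proof.
  intros H. pose proof H as (_ & h12 & h23 & _).
  destruct (pos_roots_dcubic _ _ _ _ _ H) as (D1 & D2 & D3).
  unfold root_slope. rewrite D1, D2, D3. field. repeat split; lra.
Qed.

Lemma period_slope_root_slopes_pos b c s1 s2 s3 db dc : pos_roots b c s1 s2 s3 ->
  dc - db * s2 < 0 -> dc - db * s3 < 0 ->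
  0 < period_slope s1 s2 s3
        (root_slope b db dc s1) (root_slope b db dc s2) (root_slope b db dc s3).
Proof.
  intros H N2 N3. pose proof (root_slopes_sum _ _ _ _ _ db dc H) as Sum.
  pose proof H as (_ & h12 & h23 & _).
  destruct (pos_roots_dcubic _ _ _ _ _ H) as (_ & D2 & D3).
  assert (0 < root_slope b db dc s2) by
    (unfold root_slope; rewrite D2; apply Rdiv_neg_neg; [lra | nra]).
  assert (root_slope b db dc s3 < 0) by
    (unfold root_slope; rewrite D3; apply Rdiv_neg_pos; [lra | nra]).
  apply period_slope_pos; lra.
Qed.

Lemma period_slope_root_slopes_neg b c s1 s2 s3 db dc : pos_roots b c s1 s2 s3 ->
  0 < dc - db * s2 -> 0 < dc - db * s3 ->
  period_slope s1 s2 s3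
    (root_slope b db dc s1) (root_slope b db dc s2) (root_slope b db dc s3) < 0.
Proof.
  intros H P2 P3. pose proof (root_slopes_sum _ _ _ _ _ db dc H) as Sum.
  pose proof H as (_ & h12 & h23 & _).
  destruct (pos_roots_dcubic _ _ _ _ _ H) as (_ & D2 & D3).
  assert (root_slope b db dc s2 < 0) by
    (unfold root_slope; rewrite D2; apply Rdiv_pos_neg; [lra | nra]).
  assert (0 < root_slope b db dc s3) by
    (unfold root_slope; rewrite D3; apply Rdiv_lt_0_compat; [lra | nra]).
  apply period_slope_neg; lra.
Qed.

(** * Derivatives along lines in the (J, E)-plane *)

Section Line.

Variables j0 j1 e0 e1 : R.

Definition line_b (p : R) : R := 4 * (e0 + e1 * p).
Definition line_c (p : R) : R := 2 * (j0 + j1 * p) ^ 2.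
Definition line_S1 (p : R) : R := root_sq1 (j0 + j1 * p) (e0 + e1 * p).
Definition line_S2 (p : R) : R := root_sq2 (j0 + j1 * p) (e0 + e1 * p).
Definition line_S3 (p : R) : R := root_sq3 (j0 + j1 * p) (e0 + e1 * p).
Definition line_slope (p s : R) : R := root_slope (line_b p) (4 * e1) (4 * j1 * (j0 + j1 * p)) s.

Definition line_regular (p : R) : Prop :=
  pos_roots (line_b p) (line_c p) (line_S1 p) (line_S2 p) (line_S3 p).

Lemma line_b_is_derive p : is_derive line_b p (4 * e1).
Proof. unfold line_b. auto_derive; [auto | ring]. Qed.

Lemma line_c_is_derive p : is_derive line_c p (4 * j1 * (j0 + j1 * p)).
Proof. unfold line_c. auto_derive; [auto | ring]. Qed.

Lemma line_roots_near p0 s1 s2 s3 (eps : posreal) :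
  pos_roots (line_b p0) (line_c p0) s1 s2 s3 ->
  locally p0 (fun p => line_regular p /\ Rabs (line_S1 p - s1) < eps /\
    Rabs (line_S2 p - s2) < eps /\ Rabs (line_S3 p - s3) < eps).
Proof.
  intros H.
  assert (Cb : continuous line_b p0) by
    (apply (ex_derive_continuous (V := R_NormedModule)); eexists; apply line_b_is_derive).
  assert (Cc : continuous line_c p0) by
    (apply (ex_derive_continuous (V := R_NormedModule)); eexists; apply line_c_is_derive).
  eapply filter_imp; [|exact (pos_roots_stable _ _ _ _ _ _ eps Cb Cc H)].
  intros p (r1 & r2 & r3 & Hr & D1 & D2 & D3).
  destruct (root_sq_eq (j0 + j1 * p) (e0 + e1 * p) r1 r2 r3) as (E1 & E2 & E3).
  { unfold line_b, line_c in Hr. exact Hr. }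
  unfold line_regular, line_S1, line_S2, line_S3. rewrite E1, E2, E3. auto.
Qed.

Lemma line_regular_near p0 : line_regular p0 -> locally p0 line_regular.
Proof.
  intros H. eapply filter_imp; [|exact (line_roots_near _ _ _ _ (mkposreal 1 Rlt_0_1) H)].
  intros p [Hp _]. exact Hp.
Qed.

Lemma line_roots_continuous p0 : line_regular p0 ->
  continuous line_S1 p0 /\ continuous line_S2 p0 /\ continuous line_S3 p0.
Proof.
  intros H.
  repeat split; apply (filterlim_locally (F := locally p0)); intros eps;
    eapply filter_imp; try exact (line_roots_near _ _ _ _ eps H);
    intros p (_ & D1 & D2 & D3); assumption.
Qed.

Lemma line_roots_is_derive p0 : line_regular p0 ->
  is_derive line_S1 p0 (line_slope p0 (line_S1 p0)) /\
  is_derive line_S2 p0 (line_slope p0 (line_S2 p0)) /\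
  is_derive line_S3 p0 (line_slope p0 (line_S3 p0)).
Proof.
  intros H. destruct (line_roots_continuous p0 H) as (C1 & C2 & C3).
  destruct (pos_roots_dcubic_neq0 _ _ _ _ _ H) as (N1 & N2 & N3).
  assert (Roots := line_regular_near p0 H).
  refine (conj _ (conj _ _)); apply (is_derive_cubic_root line_b line_c);
    try apply line_b_is_derive; try apply line_c_is_derive; try assumption;
    eapply filter_imp; try exact Roots; intros p Hp; apply Hp.
Qed.

Lemma line_slope_continuous (S : R -> R) p0 : continuous S p0 ->
  dcubic (line_b p0) (S p0) <> 0 -> continuous (fun p => line_slope p (S p)) p0.
Proof.
  intros CS N.
  assert (Cb : continuous line_b p0) by
    (apply (ex_derive_continuous (V := R_NormedModule)); eexists; apply line_b_is_derive).
  unfold line_slope, root_slope, Rdiv.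
  apply (continuous_mult (K := R_AbsRing) (fun p => 4 * j1 * (j0 + j1 * p) - 4 * e1 * S p)).
  - apply (continuous_minus (V := R_NormedModule)).
    + apply (ex_derive_continuous (V := R_NormedModule)). auto_derive. auto.
    + exact (continuous_scal_r (K := R_AbsRing) (4 * e1) S p0 CS).
  - apply continuous_Rinv_comp; [|exact N].
    apply (continuous_ext (fun p => (3 * S p ^ 2 - 4 * S p) + line_b p));
      [intros; unfold dcubic; simpl; ring|].
    apply (continuous_plus (V := R_NormedModule)); [|exact Cb].
    apply (continuous_comp S (fun s => 3 * s ^ 2 - 4 * s)); [exact CS|].
    apply (ex_derive_continuous (V := R_NormedModule)). auto_derive. auto.
Qed.

Lemma line_T_is_derive p0 s1 s2 s3 : pos_roots (line_b p0) (line_c p0) s1 s2 s3 ->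
  is_derive (fun p => T (j0 + j1 * p) (e0 + e1 * p)) p0
    (2 * sqrt 2 * period_slope s1 s2 s3 (line_slope p0 s1) (line_slope p0 s2) (line_slope p0 s3)).
Proof.
  intros H.
  destruct (root_sq_eq (j0 + j1 * p0) (e0 + e1 * p0) s1 s2 s3 H) as (E1 & E2 & E3).
  fold (line_S1 p0) in E1. fold (line_S2 p0) in E2. fold (line_S3 p0) in E3.
  assert (Hreg : line_regular p0) by (unfold line_regular; rewrite E1, E2, E3; exact H).
  rewrite <- E1, <- E2, <- E3.
  apply (is_derive_ext_loc
    (fun p => 2 * sqrt 2 * period_integral (line_S1 p) (line_S2 p) (line_S3 p))).
  { eapply filter_imp; [|exact (line_regular_near p0 Hreg)]. intros p Hp.
    symmetry. apply T_period_integral. exact Hp. }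
  apply (is_derive_scal (fun p => period_integral (line_S1 p) (line_S2 p) (line_S3 p))).
  destruct (line_roots_continuous p0 Hreg) as (C1 & C2 & C3).
  destruct (pos_roots_dcubic_neq0 _ _ _ _ _ Hreg) as (N1 & N2 & N3).
  apply (is_derive_period_integral _ _ _
    (fun p => line_slope p (line_S1 p)) (fun p => line_slope p (line_S2 p))
    (fun p => line_slope p (line_S3 p))).
  - eapply filter_imp; [|exact (line_regular_near p0 Hreg)]. intros p Hp.
    pose proof Hp as (_ & ? & ? & _). destruct (line_roots_is_derive p Hp) as (D1p & D2p & D3p).
    refine (conj _ (conj _ (conj D1p (conj D2p D3p)))); lra.
  - now apply line_slope_continuous.
  - now apply line_slope_continuous.
  - now apply line_slope_continuous.
Qed.

End Line.

Theorem proposition4 :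
  forall J E : R, D1 J E ->
    (exists dE : R, is_derive (fun e => T J e) E dE /\ dE > 0) /\
    (exists dJ : R, is_derive (fun j => T j E) J dJ /\ dJ < 0).
Proof.
  intros J E HD.
  assert (HJ : 0 < J) by apply HD.
  destruct (D1_pos_roots J E HD) as (s1 & s2 & s3 & H).
  pose proof H as (h0 & h12 & h23 & _).
  assert (Hs2 : 0 < 2 * sqrt 2) by (pose proof (sqrt_lt_R0 2); lra).
  assert (HE : pos_roots (line_b 0 1 E) (line_c J 0 E) s1 s2 s3).
  { unfold line_b, line_c. replace (0 + 1 * E) with E by ring.
    replace (J + 0 * E) with J by ring. exact H. }
  assert (HJ' : pos_roots (line_b E 0 J) (line_c 0 1 J) s1 s2 s3).
  { unfold line_b, line_c. replace (E + 0 * J) with E by ring.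
    replace (0 + 1 * J) with J by ring. exact H. }
  split; eexists; split.
  - apply (is_derive_ext (fun e => T (J + 0 * e) (0 + 1 * e))); [intros e; f_equal; ring|].
    exact (line_T_is_derive _ _ _ _ _ _ _ _ HE).
  - apply Rmult_lt_0_compat; [exact Hs2|].
    apply (period_slope_root_slopes_pos _ _ _ _ _ _ _ HE); nra.
  - apply (is_derive_ext (fun j => T (0 + 1 * j) (E + 0 * j))); [intros j; f_equal; ring|].
    exact (line_T_is_derive _ _ _ _ _ _ _ _ HJ').
  - match goal with |- _ * ?X < 0 => enough (X < 0) by nra end.
    apply (period_slope_root_slopes_neg _ _ _ _ _ _ _ HJ'); nra.
Qed.
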